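(* Let $n\ge 2$, and let $S$ be a semitransitive subsemigroup of $\mathcal{I}_n\setminus\mathcal{S}_n$ with $|S|\le 2n$, with transitivity blocks $X_1,\dots,X_m$. For any $x,y$ belonging to the same transitivity block there is $\alpha\in S$ which has an arrow $x\to y$ and has no arrow from $X_p$ to $X_q$ with $p\neq q$.
   Context: $\mathcal{I}_n$ denotes the symmetric inverse semigroup of all partial injective maps of $X=\{1,\dots,n\}$ to itself (including the empty map $0$), with maps written on the right and composed left to right. $\mathcal{S}_n$ is the symmetric group on $X$. A semigroup $S$ of partial transformations of $X$ is semitransitive if for all $x,y\in X$ there is $\varphi\in S$ with $x\varphi=y$ or $y\varphi=x$. For $x,y\in X$ write $x\ge y$ if $x\varphi=y$ for some $\varphi\in S$; for semitransitive $S$ this is a total preorder. The transitivity blocks $X_1,\dots,X_m$ are the equivalence classes of this preorder (i.e. $x,y$ in the same block iff $x\ge y$ and $y\ge x$), numbered so that for $x\in X_i$, $y\in X_j$ one has $x\ge y$ iff $i\le j$. An element $\alpha\in S$ has an arrow $x\to y$ if $x\in\mathrm{dom}(\alpha)$ and $x\alpha=y$; the arrow is from block $X_p$ to block $X_q$ if $x\in X_p$, $y\in X_q$. *)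

(* X = {1..n} is modelled by 'I_n. *)
From mathcomp Require Import all_boot.
Set Implicit Arguments. Unset Strict Implicit. Unset Printing Implicit Defensive.

(* A partial transformation of 'I_n: x is in the domain iff a x = Some _. *)
Definition ptrans (n : nat) := {ffun 'I_n -> option 'I_n}.

(* Composition written on the right, left to right: x (a b) = (x a) b. *)
Definition pcomp n (a b : ptrans n) : ptrans n := [ffun x => obind b (a x)].

Definition pinj n (a : ptrans n) : Prop :=
  forall u v w : 'I_n, a u = Some w -> a v = Some w -> u = v.

(* a is not a permutation (not in S_n): some point is outside its domain
   (for a partial injection of a finite set this is exactly a \notin S_n). *)
Definition not_perm n (a : ptrans n) : Prop := exists u : 'I_n, a u = None.

Definition subsemigroup_In_minus_Sn n (S : {set ptrans n}) : Prop :=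
  (forall a, a \in S -> pinj a /\ not_perm a) /\
  (forall a b, a \in S -> b \in S -> pcomp a b \in S).

Definition sge n (S : {set ptrans n}) (x y : 'I_n) : Prop :=
  exists2 phi, phi \in S & phi x = Some y.

Definition semitransitive n (S : {set ptrans n}) : Prop :=
  forall x y : 'I_n, sge S x y \/ sge S y x.

Definition same_block n (S : {set ptrans n}) (x y : 'I_n) : Prop :=
  sge S x y /\ sge S y x.

From Pilot Require Import Defs.
From mathcomp Require Import all_boot.
Set Implicit Arguments. Unset Strict Implicit. Unset Printing Implicit Defensive.

(* If x and y lie in the same block, pick a, b in S with
   x a = y and y b = x; then g := a b fixes x.  Since S is finite, the
   cyclic subsemigroup generated by g contains an idempotent e = g^M, and an
   idempotent partial injection is a partial identity, so e fixes x and
   every point of its domain.  Then alpha := e a works: x alpha = y, and any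
   arrow u -> v of alpha has u e = u and u a = v, so u >= v (via a) and
   v >= u via b g^(2M-1), because u g g^(2M-1) = u e = u. *)

(* Ssreflect also exports an unrelated [pcomp]; we mean composition in I_n. *)
Local Notation pcomp := Defs.pcomp.

Section Powers.
Variables (n : nat) (g : ptrans n).

Definition ppow (k : nat) : ptrans n := [ffun u => iter k (obind g) (Some u)].

Lemma iter_obind_None k : iter k (obind g) None = None.
Proof. by elim: k => //= k ->. Qed.

Lemma obind_ppow k o : obind (ppow k) o = iter k (obind g) o.
Proof. by case: o => [u|] /=; rewrite ?ffunE ?iter_obind_None. Qed.

Lemma ppow1 : ppow 1 = g.
Proof. by apply/ffunP => u; rewrite ffunE. Qed.

Lemma ppowD i j : pcomp (ppow i) (ppow j) = ppow (i + j).
Proof. by apply/ffunP => u; rewrite !ffunE obind_ppow -iterD addnC. Qed.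

Lemma ppow_fix x k : g x = Some x -> ppow k x = Some x.
Proof. by move=> gx; rewrite ffunE; elim: k => //= k ->; rewrite /= gx. Qed.

Lemma ppow_period i d k t :
  ppow (i + d) = ppow i -> i <= k -> ppow (k + t * d) = ppow k.
Proof.
move=> per ik; elim: t => [|t IH]; first by rewrite mul0n addn0.
have ik' : i <= k + t * d by rewrite (leq_trans ik) ?leq_addr.
rewrite mulSnr addnA -(subnK ik') -addnA -ppowD per ppowD.
by rewrite subnK.
Qed.

End Powers.

Section FiniteSemigroup.
Variables (n : nat) (S : {set ptrans n}).
Hypothesis mulS : forall a b, a \in S -> b \in S -> pcomp a b \in S.

Lemma ppow_in g k : g \in S -> 0 < k -> ppow g k \in S.
Proof.
move=> gS; elim: k => // [[|k]] IH _; first by rewrite ppow1.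
by rewrite -addn1 -ppowD ppow1 mulS ?IH.
Qed.

Lemma ppow_idempotent g :
  g \in S -> exists2 M, 0 < M & ppow g (M + M) = ppow g M.
Proof.
move=> gS; pose f (k : 'I_#|S|.+1) := ppow g k.+1.
have /injectivePn [i [j nij fij]] : ~~ injectiveb f.
  apply/injectiveP => /card_codom; rewrite card_ord => card_f.
  have : #|codom f| <= #|S|.
    by apply/subset_leq_card/subsetP => _ /codomP [k ->]; exact: ppow_in.
  by rewrite card_f ltnn.
suff idem : forall p q, p < q -> ppow g p.+1 = ppow g q.+1 ->
    exists2 M, 0 < M & ppow g (M + M) = ppow g M.
  case: (ltngtP i j) => [ij|ji|/val_inj eij].
  - exact: idem ij fij.
  - exact: idem ji (esym fij).
  - by rewrite eij eqxx in nij.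
move=> p q pq eq_pq; have d0 : 0 < q - p by rewrite subn_gt0.
have per : ppow g (p.+1 + (q - p)) = ppow g p.+1.
  by rewrite addSn subnKC 1?ltnW.
exists (p.+1 * (q - p)); first by rewrite muln_gt0.
by rewrite (ppow_period p.+1 per) // leq_pmulr.
Qed.

End FiniteSemigroup.

Lemma idempotent_pinj_fix n (e : ptrans n) (u w : 'I_n) :
  pinj e -> pcomp e e = e -> e u = Some w -> u = w.
Proof.
move=> inj_e idem_e euw; apply: (inj_e u w w euw).
by rewrite -euw -{2}idem_e ffunE euw.
Qed.

Theorem lemma2p2 (n : nat) (S : {set ptrans n}) :
  2 <= n ->
  subsemigroup_In_minus_Sn S ->
  semitransitive S ->
  #|S| <= 2 * n ->
  forall x y : 'I_n, same_block S x y ->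
  exists2 alpha, alpha \in S &
    alpha x = Some y /\
    (forall u v : 'I_n, alpha u = Some v -> same_block S u v).
Proof.
move=> _ [injS mulS] _ _ x y [[a aS axy] [b bS byx]].
pose g := pcomp a b.
have gS : g \in S by apply: mulS.
have gx : g x = Some x by rewrite ffunE axy.
have [M M0 idemM] := ppow_idempotent mulS gS.
pose e := ppow g M.
have eS : e \in S by apply: ppow_in.
have e_fix u w : e u = Some w -> u = w.
  by apply: idempotent_pinj_fix; [exact: (injS e eS).1 | rewrite ppowD idemM].
exists (pcomp e a); first exact: mulS.
split; first by rewrite ffunE ppow_fix.
move=> u v; rewrite ffunE; case eu: (e u) => [w|] //= auv.
move: (e_fix _ _ eu) => uw; subst w; split; first by exists a.
exists (pcomp b (ppow g (M + M.-1))); first by rewrite mulS ?ppow_in ?addn_gt0 ?M0.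
have bv : b v = ppow g 1 u by rewrite ppow1 ffunE auv.
have ret : pcomp (ppow g 1) (ppow g (M + M.-1)) u = Some u.
  by rewrite ppowD add1n -addnS prednK // idemM.
by rewrite ffunE bv -ret [RHS]ffunE.
Qed.
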